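(* In the parallel-links routing game with homogeneous costs described in the context, for every $l$ with $1\le l<L$: (i) $T_l(f^*_l)\le T_{l+1}(f^*_{l+1})$; (ii) $T_l(\hat f_l)\le T_{l+1}(\hat f_{l+1})$.
   Context: Parallel-links routing game: users $\mathcal N=\{1,\dots,N\}$ share parallel links $\mathcal L=\{1,\dots,L\}$ from a common source to a common destination; link $l$ has capacity $c_l$, links indexed so that $c_1\ge c_2\ge\dots\ge c_L$. User $i$ has demand $r^i>0$, $R=\sum_ir^i<\sum_lc_l$. A routing strategy of user $i$ is $\mathbf f^i=(f^i_l)_l$ with $f^i_l\ge0$, $\sum_lf^i_l=r^i$; feasible profiles form $\mathbf F$; $f_l=\sum_if^i_l$. Homogeneous costs: $J^i(\mathbf f)=\sum_lf^i_lT_l(f_l)$, each $T_l:[0,\infty)\to[0,\infty)$ strictly increasing, convex, continuously differentiable, with $T_l(f_l)=T(c_l-f_l)$ for $f_l<c_l$ and $T_l(f_l)=\infty$ for $f_l\ge c_l$, for a single link-independent function $T$ with $T(c_l-f_l)$ strictly increasing in $f_l$. $(\hat f_l)_l$ are the link totals of the unique Nash equilibrium (feasible profile where each user's strategy minimizes its own cost given the others'). $(f^*_l)_l$ are the link totals minimizing the social cost $\sum_lf_lT_l(f_l)$ over feasible profiles. *)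

From mathcomp Require Import all_boot all_order all_algebra.
From mathcomp Require Import all_classical all_reals all_analysis.
Import Order.TTheory GRing.Theory Num.Theory.
Import numFieldNormedType.Exports.
Set Implicit Arguments.
Unset Strict Implicit.
Unset Printing Implicit Defensive.
Local Open Scope ring_scope.
Local Open Scope classical_set_scope.

(* Links are indexed by natural numbers 0 .. L-1 (paper: 1 .. L),
   users by 'I_N.  A profile is f : 'I_N -> nat -> R, f i l = f^i_l. *)

Definition linkcost (R : realType) (T : R -> R) (c : nat -> R) (l : nat) (x : R)
  : \bar R := if x < c l then (T (c l - x))%:E else +oo%E.

Definition strategy (R : realType) (L : nat) (rr : R) (g : nat -> R) : Prop :=
  (forall l, (l < L)%N -> 0 <= g l) /\ \sum_(l < L) g l = rr.

Definition feasible (R : realType) (N L : nat) (r : 'I_N -> R)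
  (f : 'I_N -> nat -> R) : Prop := forall i, strategy L (r i) (f i).

Definition link_flow (R : realType) (N : nat) (f : 'I_N -> nat -> R) (l : nat) : R :=
  \sum_(i < N) f i l.

Definition user_cost (R : realType) (N L : nat) (T : R -> R) (c : nat -> R)
  (f : 'I_N -> nat -> R) (i : 'I_N) : \bar R :=
  (\sum_(l < L) ((f i l)%:E * linkcost T c l (link_flow f l)))%E.

Definition replace (R : realType) (N : nat) (f : 'I_N -> nat -> R) (i : 'I_N)
  (g : nat -> R) : 'I_N -> nat -> R := fun j => if j == i then g else f j.

Definition is_Nash (R : realType) (N L : nat) (T : R -> R) (c : nat -> R)
  (r : 'I_N -> R) (f : 'I_N -> nat -> R) : Prop :=
  feasible L r f /\
  forall i g, strategy L (r i) g ->
    (user_cost L T c f i <= user_cost L T c (replace f i g) i)%E.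

Definition social_cost (R : realType) (N L : nat) (T : R -> R) (c : nat -> R)
  (f : 'I_N -> nat -> R) : \bar R :=
  (\sum_(l < L) ((link_flow f l)%:E * linkcost T c l (link_flow f l)))%E.

Definition is_social_opt (R : realType) (N L : nat) (T : R -> R) (c : nat -> R)
  (r : 'I_N -> R) (f : 'I_N -> nat -> R) : Prop :=
  feasible L r f /\
  forall g, feasible L r g -> (social_cost L T c f <= social_cost L T c g)%E.

Definition homogeneous_costs (R : realType) (L : nat) (T : R -> R) (c : nat -> R)
  : Prop :=
  forall l, (l < L)%N ->
    (forall x, 0 <= x -> x < c l -> 0 <= T (c l - x)) /\
    (forall x y, 0 <= x -> x < y -> y < c l -> T (c l - x) < T (c l - y)) /\
    (forall x y t, 0 <= x -> x < c l -> 0 <= y -> y < c l -> 0 <= t -> t <= 1 ->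
       T (c l - (t * x + (1 - t) * y)) <= t * T (c l - x) + (1 - t) * T (c l - y)) /\
    (exists dT : R -> R,
       {within `[0, c l[%classic, continuous dT} /\
       {within `[0, c l[%classic, continuous (fun x => T (c l - x))} /\
       (forall x, 0 < x -> x < c l -> is_derive x 1 (fun y => T (c l - y)) (dT x))).

From mathcomp Require Import all_boot all_order all_algebra.
From mathcomp Require Import all_classical all_reals all_analysis.
From mathcomp Require Import ring lra.
Import Order.TTheory GRing.Theory Num.Theory.
Local Open Scope ring_scope.

(* Write phi(z) = T(c_l - z), convex and increasing on [0, c_l); then
   T_{l+1}(z) = phi(z + c_l - c_{l+1}).  If at a social optimum or a Nash
   equilibrium both link costs are finite and T_l(f_l) > T_{l+1}(f_{l+1}), then
   a = f_l exceeds b = f_{l+1} + c_l - c_{l+1}, and some user routes more on l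
   than on l+1.  Moving a small amount e of that user's flow from l to l+1 lowers
   both his cost and the social cost: convexity gives
   phi(b + e) - phi(b) <= phi(a) - phi(a - e), and the moved mass pays
   phi(b + e) < phi(a - e) instead.  The costs at an optimum or equilibrium are
   finite because a total demand below the total capacity always leaves a
   finite-cost alternative: split the demand proportionally to the residual
   capacities. *)

Section ConvexIncreasing.

Context {R : realType} {C : R} {phi : R -> R}.

Hypothesis phi_incr : forall x y, 0 <= x -> x < y -> y < C -> phi x < phi y.

Hypothesis phi_convex : forall x y t,
  0 <= x -> x < C -> 0 <= y -> y < C -> 0 <= t -> t <= 1 ->
  phi (t * x + (1 - t) * y) <= t * phi x + (1 - t) * phi y.

Lemma convex_inner_pair_le p q s : 0 <= p -> p < q -> q < s -> s < C ->
  phi q + phi (s + p - q) <= phi p + phi s.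
Proof.
move=> p0 pq qs sC.
have sp : 0 < s - p by lra.
have pC : p < C by lra.
have s0 : 0 <= s by lra.
set t := (s - q) / (s - p).
have t0 : 0 <= t by apply: divr_ge0; lra.
have t1 : t <= 1 by rewrite ler_pdivrMr //; lra.
have hq := @phi_convex p s t p0 pC s0 sC t0 t1.
have hq' := @phi_convex p s (1 - t) p0 pC s0 sC.
have -> : q = t * p + (1 - t) * s by rewrite /t; field; apply/eqP; lra.
have -> : s + p - (t * p + (1 - t) * s) = (1 - t) * p + (1 - (1 - t)) * s.
  by ring.
have := hq' ltac:(lra) ltac:(lra); lra.
Qed.

Lemma weighted_exchange_lt a b x y e :
  0 <= b -> 0 <= y -> y <= x -> 0 < e -> b + e < a - e -> a < C ->
  (x - e) * phi (a - e) + (y + e) * phi (b + e) < x * phi a + y * phi b.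
Proof.
move=> b0 y0 yx e0 hba aC.
have hpair := @convex_inner_pair_le b (b + e) a b0 ltac:(lra) ltac:(lra) aC.
rewrite (_ : a + b - (b + e) = a - e) in hpair; last by ring.
have hb : phi b < phi (b + e) by apply: phi_incr; lra.
have hab : phi (b + e) < phi (a - e) by apply: phi_incr; lra.
have ha : 0 < phi a - phi (a - e) by lra.
nra.
Qed.

Lemma lt_of_phi_lt a y : 0 <= a -> y < C -> phi y < phi a -> y < a.
Proof.
move=> a0 yC hy; rewrite ltNge; apply/negP; rewrite le_eqVlt.
case/orP=> [/eqP ay|ay]; first by rewrite ay ltxx in hy.
by have := @phi_incr a y a0 ay yC; lra.
Qed.

End ConvexIncreasing.

Definition prop_split {R : realType} (L : nat) (D : nat -> R) (rho : R) (k : nat) : R :=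
  rho * Num.max (D k) 0 / \sum_(j < L) Num.max (D j) 0.

Lemma lt_sum_max {R : realType} {L : nat} {D : nat -> R} {rho : R} :
  rho < \sum_(k < L) D k -> rho < \sum_(k < L) Num.max (D k) 0.
Proof.
move=> /lt_le_trans; apply; apply: ler_sum => k _.
by rewrite le_max lexx.
Qed.

Lemma prop_split_sum (R : realType) (L N : nat) (D : nat -> R) (rho : 'I_N -> R) k :
  \sum_(i < N) prop_split L D (rho i) k = prop_split L D (\sum_(i < N) rho i) k.
Proof. by rewrite /prop_split -!mulr_suml. Qed.

Lemma prop_split_strategy {R : realType} {L : nat} {D : nat -> R} {rho : R} :
  0 <= rho -> rho < \sum_(j < L) Num.max (D j) 0 ->
  strategy L rho (prop_split L D rho).
Proof.
move=> rho0 rhoS; have S0 := le_lt_trans rho0 rhoS.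
split=> [k _|].
  by apply: divr_ge0; [apply: mulr_ge0; rewrite // le_max lexx orbT | exact: ltW].
rewrite /prop_split -mulr_suml -mulr_sumr; field; exact: lt0r_neq0.
Qed.

Lemma prop_split_small {R : realType} {L : nat} {D : nat -> R} {rho : R} k :
  0 <= rho -> rho < \sum_(j < L) Num.max (D j) 0 ->
  prop_split L D rho k = 0 \/ prop_split L D rho k < D k.
Proof.
move=> rho0 rhoS; have S0 := le_lt_trans rho0 rhoS.
rewrite /prop_split; have [Dk0|Dk0] := leP (D k) 0.
  by left; rewrite mulr0 mul0r.
by right; rewrite ltr_pdivrMr // mulrC ltr_pM2l.
Qed.

Lemma sumrB_two_points {V : zmodType} {L : nat} {u v : nat -> V} {j k : nat}
  (jL : (j < L)%N) (kL : (k < L)%N) :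
  j != k -> (forall m, m != j -> m != k -> u m = v m) ->
  \sum_(m < L) u m - \sum_(m < L) v m = (u j - v j) + (u k - v k).
Proof.
move=> jk uv; rewrite -sumrB (bigD1 (Ordinal jL)) //= (bigD1 (Ordinal kL)) /=.
  by rewrite big1 ?addr0 // => m /andP[mj mk]; rewrite uv ?subrr.
by rewrite -val_eqE /= eq_sym.
Qed.

Section LinkCosts.

Context {R : realType} {L : nat} {T : R -> R} {c : nat -> R}.

Lemma costsum_fin {X y : nat -> R} :
  (forall k, (k < L)%N -> X k = 0 \/ y k < c k) ->
  (\sum_(k < L) (X k)%:E * linkcost T c k (y k) =
     (\sum_(k < L) X k * T (c k - y k))%:E)%E.
Proof.
move=> fin; rewrite -sumEFin; apply: eq_bigr => k _.
by case: (fin k (ltn_ord k)) => [->|yc]; rewrite ?mul0e ?mul0r // /linkcost yc.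
Qed.

Lemma linkcost_mul_ge0 k (x y : R) :
  homogeneous_costs L T c -> (k < L)%N -> 0 <= x -> 0 <= y ->
  (0 <= x%:E * linkcost T c k y)%E.
Proof.
move=> hc kL x0 y0; apply: mule_ge0; first by rewrite lee_fin.
by rewrite /linkcost; case: ifP => // yc; rewrite lee_fin; apply: (hc k kL).1.
Qed.

Lemma costsum_lty_fin {X y : nat -> R} :
  homogeneous_costs L T c ->
  (forall k, (k < L)%N -> 0 <= X k) -> (forall k, (k < L)%N -> 0 <= y k) ->
  (\sum_(k < L) (X k)%:E * linkcost T c k (y k) < +oo)%E ->
  forall k, (k < L)%N -> X k = 0 \/ y k < c k.
Proof.
move=> hc X0 y0 hs k kL; have [yc|yc] := ltP (y k) (c k); first by right.
left; apply/eqP; apply: contraTT hs => Xk.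
have Xp : 0 < X k by rewrite lt0r Xk X0.
rewrite -leNgt (bigD1 (Ordinal kL)) //=.
have -> : ((X k)%:E * linkcost T c k (y k) = +oo)%E.
  by rewrite /linkcost ltNge yc /= gt0_muley ?lte_fin.
rewrite addye //.
apply/eqP => hNy.
have : (0 <= \sum_(j < L | j != Ordinal kL) (X j)%:E * linkcost T c j (y j))%E.
  by apply: sume_ge0 => j _; apply: linkcost_mul_ge0; rewrite ?X0 ?y0.
by rewrite hNy.
Qed.

Lemma costsum_lt_two_points {X Y x y : nat -> R} {j k : nat} :
  (j < L)%N -> (k < L)%N -> j != k ->
  (forall m, (m < L)%N -> X m = 0 \/ x m < c m) ->
  (forall m, m != j -> m != k -> X m = Y m /\ x m = y m) ->
  y j < c j -> y k < c k ->
  Y j * T (c j - y j) + Y k * T (c k - y k) <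
    X j * T (c j - x j) + X k * T (c k - x k) ->
  (\sum_(m < L) (Y m)%:E * linkcost T c m (y m) <
     \sum_(m < L) (X m)%:E * linkcost T c m (x m))%E.
Proof.
move=> jL kL jk finX XY yj yk hlt.
have finY m : (m < L)%N -> Y m = 0 \/ y m < c m.
  move=> mL; have [->|mj] := eqVneq m j; first by right.
  have [->|mk] := eqVneq m k; first by right.
  by have [<- <-] := XY m mj mk; exact: finX.
rewrite (costsum_fin finX) (costsum_fin finY) lte_fin -subr_gt0.
rewrite (sumrB_two_points (u := fun m => X m * T (c m - x m))
  (v := fun m => Y m * T (c m - y m)) jL kL jk) /=; first lra.
by move=> m mj mk; have [-> ->] := XY m mj mk.
Qed.

Lemma linkcost_le j k (x y : R) :
  0 <= y -> c k <= c j -> x = 0 \/ x < c j ->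
  (x < c j -> y < c k -> T (c j - x) <= T (c k - y)) ->
  (linkcost T c j x <= linkcost T c k y)%E.
Proof.
move=> y0 ckj finx hT; rewrite [X in (_ <= X)%E]/linkcost.
have [yk|] := ltP y (c k); last by rewrite leey.
have xj : x < c j by case: finx => [->|//]; lra.
by rewrite /linkcost xj lee_fin hT.
Qed.

End LinkCosts.

Section Profiles.

Context {R : realType} {N L : nat} {r : 'I_N -> R}.

Lemma replace_at (f : 'I_N -> nat -> R) i g : replace f i g i = g.
Proof. by rewrite /replace eqxx. Qed.

Lemma link_flow_replace (f : 'I_N -> nat -> R) i g k :
  link_flow (replace f i g) k = link_flow f k - f i k + g k.
Proof.
rewrite /link_flow (bigD1 i) //= [in RHS](bigD1 i) //= replace_at.
rewrite (eq_bigr (fun j => f j k)); last by move=> j /negbTE ji; rewrite /replace ji.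
ring.
Qed.

Lemma feasible_replace {f i g} :
  feasible L r f -> strategy L (r i) g -> feasible L r (replace f i g).
Proof. by move=> hf hs j; rewrite /replace; case: eqP => [->|]. Qed.

Lemma sum_link_flow {f} :
  feasible L r f -> \sum_(k < L) link_flow f k = \sum_(i < N) r i.
Proof.
move=> hf; rewrite /link_flow exchange_big /=; apply: eq_bigr => i _.
by case: (hf i).
Qed.

Lemma link_flow_ge0 {f k} : feasible L r f -> (k < L)%N -> 0 <= link_flow f k.
Proof.
by move=> hf kL; apply: sumr_ge0 => i _; exact: (hf i).1.
Qed.

End Profiles.

Lemma exists_user_lt (R : realType) (N : nat) (f : 'I_N -> nat -> R) j k :
  link_flow f k < link_flow f j -> exists i, f i k < f i j.
Proof.
move=> hkj; apply/existsP; apply: contraTT hkj => /existsPn hle.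
by rewrite -leNgt; apply: ler_sum => i _; rewrite leNgt hle.
Qed.

Definition shift {R : realType} (g : nat -> R) (j k : nat) (e : R) (m : nat) : R :=
  if m == j then g j - e else if m == k then g k + e else g m.

Section Shift.

Context {R : realType} {g : nat -> R} {j k : nat} {e : R}.

Lemma shift_src : shift g j k e j = g j - e.
Proof. by rewrite /shift eqxx. Qed.

Lemma shift_dst : j != k -> shift g j k e k = g k + e.
Proof. by rewrite /shift eq_sym => /negbTE ->; rewrite eqxx. Qed.

Lemma shift_other m : m != j -> m != k -> shift g j k e m = g m.
Proof. by rewrite /shift => /negbTE -> /negbTE ->. Qed.

Lemma shift_strategy {L rho} : (j < L)%N -> (k < L)%N -> j != k ->
  0 <= e -> e <= g j -> strategy L rho g -> strategy L rho (shift g j k e).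
Proof.
move=> jL kL jk e0 ej [g0 gsum]; split=> [m mL|].
  rewrite /shift; case: ifP => _; first lra.
  by case: ifP => _; [have := g0 k kL; lra | exact: g0].
apply/eqP; rewrite -gsum -subr_eq0; apply/eqP.
rewrite (sumrB_two_points (u := shift g j k e) (v := g) jL kL jk).
  by rewrite shift_src shift_dst //; ring.
exact: shift_other.
Qed.

End Shift.

Section Equilibria.

Context {R : realType} {N L : nat} {c : nat -> R} {r : 'I_N -> R} {T : R -> R}.

Hypothesis hr : forall i, 0 < r i.
Hypothesis hsum : \sum_(i < N) r i < \sum_(l < L) c l.
Hypothesis hc : homogeneous_costs L T c.

Lemma social_opt_flows_fin {fs} : is_social_opt L T c r fs ->
  forall k, (k < L)%N -> link_flow fs k = 0 \/ link_flow fs k < c k.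
Proof.
move=> [hf hopt].
have hcap := lt_sum_max hsum.
have r_le_sum i : r i <= \sum_(j < N) r j.
  by rewrite (bigD1 i) //= lerDl; apply: sumr_ge0 => j _; exact: ltW.
have sum_r0 : 0 <= \sum_(j < N) r j by apply: sumr_ge0 => j _; exact: ltW.
pose g (i : 'I_N) := prop_split L c (r i).
have hg : feasible L r g.
  by move=> i; apply: prop_split_strategy (ltW (hr i)) (le_lt_trans (r_le_sum i) hcap).
have fin : (social_cost L T c g < +oo)%E.
  rewrite /social_cost costsum_fin ?ltry // => k _.
  by rewrite /link_flow prop_split_sum; exact: prop_split_small.
apply: (costsum_lty_fin hc) (le_lt_trans (hopt g hg) fin) => k kL;
  exact: link_flow_ge0 hf kL.
Qed.

Lemma Nash_user_flows_fin {fn} : is_Nash L T c r fn ->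
  forall i k, (k < L)%N -> fn i k = 0 \/ link_flow fn k < c k.
Proof.
move=> [hf hN] i.
pose D k := c k - (link_flow fn k - fn i k).
have hD : r i < \sum_(k < L) D k.
  suff -> : \sum_(k < L) D k = \sum_(k < L) c k - \sum_(i < N) r i + r i.
    by rewrite ltrDr subr_gt0.
  by rewrite /D !sumrB (sum_link_flow hf); case: (hf i) => _ ->; ring.
have hcap := lt_sum_max hD.
pose g := prop_split L D (r i).
have hs : strategy L (r i) g := prop_split_strategy (ltW (hr i)) hcap.
have fin : (user_cost L T c (replace fn i g) i < +oo)%E.
  rewrite /user_cost replace_at; under eq_bigr do rewrite link_flow_replace.
  rewrite (costsum_fin (X := g) (y := fun k => link_flow fn k - fn i k + g k)) ?ltry //.
  move=> k _.
  have [|small] := prop_split_small k (ltW (hr i)) hcap; first by left.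
  by right; move: small; rewrite /D /g; lra.
apply: (costsum_lty_fin hc) (le_lt_trans (hN i g hs) fin) => k kL.
  exact: (hf i).1.
exact: link_flow_ge0 hf kL.
Qed.

Lemma Nash_link_flows_fin {fn} : is_Nash L T c r fn ->
  forall k, (k < L)%N -> link_flow fn k = 0 \/ link_flow fn k < c k.
Proof.
move=> hN k kL; have [|ck] := ltP (link_flow fn k) (c k); [by right | left].
rewrite /link_flow big1 // => i _.
by case: (Nash_user_flows_fin hN i k kL) => // lt; rewrite ltNge ck in lt.
Qed.

Lemma exists_improving_shift {f j k} : feasible L r f ->
  (j < L)%N -> (k < L)%N -> j != k -> c k <= c j ->
  link_flow f j < c j -> link_flow f k < c k ->
  T (c k - link_flow f k) < T (c j - link_flow f j) ->
  exists i g, strategy L (r i) g /\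
    ((forall m, (m < L)%N -> f i m = 0 \/ link_flow f m < c m) ->
       (user_cost L T c (replace f i g) i < user_cost L T c f i)%E) /\
    ((forall m, (m < L)%N -> link_flow f m = 0 \/ link_flow f m < c m) ->
       (social_cost L T c (replace f i g) < social_cost L T c f)%E).
Proof.
move=> hf jL kL jk ckj ha hb hT.
have [_ [phi_incr [phi_convex _]]] := hc j jL.
pose phi z := T (c j - z).
pose d := c j - c k.
have a0 : 0 <= link_flow f j := link_flow_ge0 hf jL.
have b0 : 0 <= link_flow f k := link_flow_ge0 hf kL.
have Tk z : T (c k - z) = phi (z + d) by rewrite /phi /d; congr T; ring.
have hbd : link_flow f k + d < link_flow f j.
  apply: (@lt_of_phi_lt _ _ phi phi_incr) a0 _ _; first by rewrite /d; lra.
  by rewrite -Tk.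
have [i hi] := @exists_user_lt _ _ f j k ltac:(rewrite /d in hbd; lra).
have fik0 : 0 <= f i k := (hf i).1 k kL.
pose e := Num.min (f i j) ((link_flow f j - (link_flow f k + d)) / 4).
have e0 : 0 < e by rewrite lt_min; apply/andP; split; [lra | apply: divr_gt0; lra].
have e_le : e <= f i j by rewrite ge_min lexx.
have e_gap : link_flow f k + d + e < link_flow f j - e.
  have : e <= (link_flow f j - (link_flow f k + d)) / 4 by rewrite ge_min lexx orbT.
  lra.
pose g := shift (f i) j k e.
have hs : strategy L (r i) g := shift_strategy jL kL jk (ltW e0) e_le (hf i).
have flow m : link_flow (replace f i g) m = link_flow f m - f i m + g m.
  exact: link_flow_replace.
have flow_j : link_flow (replace f i g) j = link_flow f j - e.
  by rewrite flow /g shift_src; ring.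
have flow_k : link_flow (replace f i g) k = link_flow f k + e.
  by rewrite flow /g shift_dst //; ring.
have flow_other m : m != j -> m != k -> link_flow (replace f i g) m = link_flow f m.
  by move=> mj mk; rewrite flow /g shift_other //; ring.
have gain x y : 0 <= y -> y <= x ->
    (x - e) * T (c j - (link_flow f j - e)) + (y + e) * T (c k - (link_flow f k + e)) <
    x * T (c j - link_flow f j) + y * T (c k - link_flow f k).
  move=> y0 yx; rewrite !Tk (_ : link_flow f k + e + d = link_flow f k + d + e); last by ring.
  apply: (@weighted_exchange_lt _ _ phi phi_incr phi_convex) => //.
  by rewrite /d; lra.
have yj : link_flow (replace f i g) j < c j by rewrite flow_j; lra.
have yk : link_flow (replace f i g) k < c k by rewrite flow_k; rewrite /d in e_gap; lra.
exists i, g; split=> //; split=> fin.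
- rewrite /user_cost replace_at; apply: (costsum_lt_two_points jL kL jk fin) => //.
    by move=> m mj mk; rewrite flow_other // /g shift_other.
  by rewrite /g shift_src shift_dst // flow_j flow_k; apply: gain; lra.
- rewrite /social_cost; apply: (costsum_lt_two_points jL kL jk fin) => //.
    by move=> m mj mk; rewrite flow_other.
  by rewrite flow_j flow_k; apply: gain; rewrite /d in hbd; lra.
Qed.

End Equilibria.

Theorem lemma2p2 (R : realType) (N L : nat) (c : nat -> R) (r : 'I_N -> R)
  (T : R -> R) :
  (forall l, (l.+1 < L)%N -> c l.+1 <= c l) ->
  (forall i, 0 < r i) ->
  \sum_(i < N) r i < \sum_(l < L) c l ->
  homogeneous_costs L T c ->
  (forall fs, is_social_opt L T c r fs ->
     forall l, (l.+1 < L)%N ->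
       (linkcost T c l (link_flow fs l) <= linkcost T c l.+1 (link_flow fs l.+1))%E) /\
  (forall fn, is_Nash L T c r fn ->
     forall l, (l.+1 < L)%N ->
       (linkcost T c l (link_flow fn l) <= linkcost T c l.+1 (link_flow fn l.+1))%E).
Proof.
move=> hord hr hsum hc; split=> [fs hopt | fn hN] l hl; have lL := ltnW hl.
- have [hf hbest] := hopt; have fin := social_opt_flows_fin hr hsum hc hopt.
  apply: linkcost_le (link_flow_ge0 hf hl) (hord l hl) (fin l lL) _ => ha hb.
  rewrite leNgt; apply/negP => hT.
  have [i [g [hs [_ hsoc]]]] := exists_improving_shift hc hf lL hl
    (negbT (ltn_eqF (ltnSn l))) (hord l hl) ha hb hT.
  by have := hbest _ (feasible_replace hf hs); rewrite leNgt (hsoc fin).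
- have [hf hbest] := hN; have fin := Nash_user_flows_fin hr hsum hc hN.
  apply: linkcost_le (link_flow_ge0 hf hl) (hord l hl)
    (Nash_link_flows_fin hr hsum hc hN l lL) _ => ha hb.
  rewrite leNgt; apply/negP => hT.
  have [i [g [hs [husr _]]]] := exists_improving_shift hc hf lL hl
    (negbT (ltn_eqF (ltnSn l))) (hord l hl) ha hb hT.
  by have := hbest i g hs; rewrite leNgt (husr (fin i)).
Qed.
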